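(* Let $(f^*,g^* )$ be a stationary $\hat\beta$-discounted Nash equilibrium of a two-player discrete time stochastic game for some $\hat\beta\in[0,1)$, and suppose: (C1) $(f^*,g^* )$ is pure, i.e. for each $s\in S$ there are actions $a^1_s\in A^1(s)$, $a^2_s\in A^2(s)$ with $f^*(s,a^1_s)=1$, $g^*(s,a^2_s)=1$; (C2) there exist $p_s\ge0$ ($s\in S$) with $\sum_{s\in S}p_s=1$ such that $P(f^*,g^* )_{ss'}=p_{s'}$ for all $s,s'\in S$ (every row of $P(f^*,g^* )$ equals $(p_1,\dots,p_{|S|})$); (C3) for all $s\in S$ and $a^1\in A^1(s)$: $\sum_{s'\in S}p_{s'}r^1(s',a^1_{s'},a^2_{s'})\ge\sum_{s'\in S}p(s'\mid s,a^1,a^2_s)\,r^1(s',a^1_{s'},a^2_{s'})$, and for all $s\in S$ and $a^2\in A^2(s)$: $\sum_{s'\in S}p_{s'}r^2(s',a^1_{s'},a^2_{s'})\ge\sum_{s'\in S}p(s'\mid s,a^1_s,a^2)\,r^2(s',a^1_{s'},a^2_{s'})$. Then $(f^*,g^* )$ is a Blackwell-Nash equilibrium.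
   Context: A two-player discrete time stochastic game consists of a finite state set $S$, finite nonempty action sets $A^1(s),A^2(s)$ for each $s\in S$, reward functions $r^i(s,a^1,a^2)$ for $i=1,2$, and transition probabilities $p(s'\mid s,a^1,a^2)$. A stationary strategy of player 1 is $f=(f(s))_{s\in S}$ with $f(s)$ a probability distribution on $A^1(s)$, $f(s,a^1)$ denoting the probability of $a^1$; similarly $g$ for player 2. For a stationary pair $(f,g)$ let $r^i(s,f,g)=\sum_{a^1,a^2}f(s,a^1)g(s,a^2)r^i(s,a^1,a^2)$ and $P(f,g)$ the $|S|\times|S|$ matrix with entries $P(f,g)_{ss'}=\sum_{a^1,a^2}f(s,a^1)g(s,a^2)p(s'\mid s,a^1,a^2)$. For $\beta\in[0,1)$ the $\beta$-discounted payoff vector of player $i$ is $v^i_\beta(f,g)=(I-\beta P(f,g))^{-1}r^i(f,g)$, with $s$-th component $v^i_\beta(s,f,g)$. A stationary pair $(f^*,g^* )$ is a $\beta$-discounted Nash equilibrium if for all $s\in S$, $v^1_\beta(s,f^*,g^* )\ge v^1_\beta(s,f,g^* )$ for all stationary $f$ and $v^2_\beta(s,f^*,g^* )\ge v^2_\beta(s,f^*,g)$ for all stationary $g$. A stationary pair is a Blackwell-Nash equilibrium (BNE) if there is $\beta_0\in[0,1)$ such that it is a $\beta$-discounted Nash equilibrium for every $\beta\in[\beta_0,1)$. *)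

(* States are 'I_n (any finite state set S), the number
   field is an arbitrary realFieldType R (the paper: R = reals). *)
From HB Require Import structures.
From mathcomp Require Import all_boot all_order all_algebra.
Set Implicit Arguments. Unset Strict Implicit. Unset Printing Implicit Defensive.
Import Order.TTheory GRing.Theory Num.Theory.
Local Open Scope ring_scope.

Record game (R : realFieldType) (n : nat) := Game {
  A1 : 'I_n -> finType;
  A2 : 'I_n -> finType;
  rew1 : forall s : 'I_n, A1 s -> A2 s -> R;
  rew2 : forall s : 'I_n, A1 s -> A2 s -> R;
  trans : forall s : 'I_n, A1 s -> A2 s -> 'I_n -> R  (* trans s a1 a2 s' = p(s'|s,a1,a2) *)
}.
Arguments A1 {R n} g s : rename.
Arguments A2 {R n} g s : rename.
Arguments rew1 {R n} g s _ _ : rename.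
Arguments rew2 {R n} g s _ _ : rename.
Arguments trans {R n} g s _ _ _ : rename.

Definition game_wf (R : realFieldType) (n : nat) (G : game R n) : Prop :=
  (forall s, 0 < #|A1 G s|)%N /\ (forall s, 0 < #|A2 G s|)%N /\
  (forall s a1 a2 s', 0 <= trans G s a1 a2 s') /\
  (forall s a1 a2, \sum_(s' < n) trans G s a1 a2 s' = 1).

Definition strat1 (R : realFieldType) (n : nat) (G : game R n) :=
  forall s : 'I_n, A1 G s -> R.
Definition strat2 (R : realFieldType) (n : nat) (G : game R n) :=
  forall s : 'I_n, A2 G s -> R.

Definition is_strat1 (R : realFieldType) (n : nat) (G : game R n) (f : strat1 G) : Prop :=
  (forall s a, 0 <= f s a) /\ (forall s, \sum_(a : A1 G s) f s a = 1).
Definition is_strat2 (R : realFieldType) (n : nat) (G : game R n) (g : strat2 G) : Prop :=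
  (forall s a, 0 <= g s a) /\ (forall s, \sum_(a : A2 G s) g s a = 1).

Definition rew1_fg (R : realFieldType) (n : nat) (G : game R n)
  (f : strat1 G) (g : strat2 G) : 'cV[R]_n :=
  \col_s \sum_(a1 : A1 G s) \sum_(a2 : A2 G s) f s a1 * g s a2 * rew1 G s a1 a2.
Definition rew2_fg (R : realFieldType) (n : nat) (G : game R n)
  (f : strat1 G) (g : strat2 G) : 'cV[R]_n :=
  \col_s \sum_(a1 : A1 G s) \sum_(a2 : A2 G s) f s a1 * g s a2 * rew2 G s a1 a2.

Definition P_fg (R : realFieldType) (n : nat) (G : game R n)
  (f : strat1 G) (g : strat2 G) : 'M[R]_n :=
  \matrix_(s, s') \sum_(a1 : A1 G s) \sum_(a2 : A2 G s)
      f s a1 * g s a2 * trans G s a1 a2 s'.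

Definition v1 (R : realFieldType) (n : nat) (G : game R n) (beta : R)
  (f : strat1 G) (g : strat2 G) : 'cV[R]_n :=
  invmx (1%:M - beta *: P_fg f g) *m rew1_fg f g.
Definition v2 (R : realFieldType) (n : nat) (G : game R n) (beta : R)
  (f : strat1 G) (g : strat2 G) : 'cV[R]_n :=
  invmx (1%:M - beta *: P_fg f g) *m rew2_fg f g.

Definition disc_NE (R : realFieldType) (n : nat) (G : game R n) (beta : R)
  (fs : strat1 G) (gs : strat2 G) : Prop :=
  forall s : 'I_n,
    (forall f : strat1 G, is_strat1 f -> v1 beta f gs s 0 <= v1 beta fs gs s 0) /\
    (forall g : strat2 G, is_strat2 g -> v2 beta fs g s 0 <= v2 beta fs gs s 0).

Definition BNE (R : realFieldType) (n : nat) (G : game R n)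
  (fs : strat1 G) (gs : strat2 G) : Prop :=
  exists beta0 : R, 0 <= beta0 < 1 /\
    forall beta : R, beta0 <= beta < 1 -> disc_NE beta fs gs.

From HB Require Import structures.
From mathcomp Require Import all_boot all_order all_algebra.
From mathcomp Require Import ring lra.
Set Implicit Arguments. Unset Strict Implicit. Unset Printing Implicit Defensive.
Import Order.TTheory GRing.Theory Num.Theory.
Local Open Scope ring_scope.

(* Fixing one player's pure strategy leaves the other with a Markov decision
   problem, in which a stationary policy is beta-optimal iff no one-step
   deviation has positive advantage  r(s,a) + beta * E[v] - v(s).  Because
   every row of the equilibrium transition matrix is the same distribution p,
   the equilibrium value is r(s, a_s) plus a constant, and the advantage of a
   deviation a at s becomes
     (r(s,a) - r(s,a_s)) - beta * (sum_t p_t r(t,a_t) - sum_t p(t|s,a) r(t,a_t)),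
   where the bracket is nonnegative by (C3).  This is nonincreasing in beta, so
   nonpositivity at the equilibrium discount factor persists for all larger
   discount factors. *)

Section DiscountMatrix.
Variables (R : realFieldType) (n : nat).

Definition row_stochastic (Q : 'M[R]_n) : Prop :=
  (forall i j, 0 <= Q i j) /\ (forall i, \sum_j Q i j = 1).

Definition discount_mx (b : R) (Q : 'M[R]_n) : 'M[R]_n := 1%:M - b *: Q.

Lemma discount_mxE b Q (x : 'cV[R]_n) i :
  (discount_mx b Q *m x) i 0 = x i 0 - b * \sum_j Q i j * x j 0.
Proof. by rewrite mulmxBl mul1mx -scalemxAl !mxE. Qed.

Variables (Q : 'M[R]_n) (b : R).
Hypotheses (HQ : row_stochastic Q) (Hb : 0 <= b < 1).

(* Minimum principle: look at an entry where x is smallest. *)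
Lemma discount_mx_ge0 (x : 'cV[R]_n) :
  (forall i, 0 <= (discount_mx b Q *m x) i 0) -> forall i, 0 <= x i 0.
Proof.
have [[Q_ge0 Q_sum1] /andP[b_ge0 b_lt1]] := (HQ, Hb).
move=> Dx_ge0 i.
have [m _ m_min] := @arg_minP _ R 'I_n i xpredT (fun j => x j 0) isT.
apply: le_trans (m_min i isT).
have Qx_ge : x m 0 <= \sum_j Q m j * x j 0.
  rewrite -[x m 0]mul1r -(Q_sum1 m) mulr_suml; apply: ler_sum => j _.
  by apply: (ler_wpM2l (Q_ge0 m j)); apply: m_min.
have bx_le : b * x m 0 <= x m 0.
  by apply: le_trans (ler_wpM2l b_ge0 Qx_ge) _; rewrite -subr_ge0 -discount_mxE.
by rewrite -(pmulr_rge0 _ (_ : 0 < 1 - b)) ?subr_gt0 // mulrBl mul1r subr_ge0.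
Qed.

Lemma discount_mx_le (x : 'cV[R]_n) :
  (forall i, 0 <= (discount_mx b Q *m x) i 0) ->
  forall i, (discount_mx b Q *m x) i 0 <= x i 0.
Proof.
move=> Dx_ge0 i; rewrite discount_mxE gerBl.
apply: mulr_ge0; first by case/andP: Hb.
apply: sumr_ge0 => j _; apply: mulr_ge0; first exact: HQ.1.
exact: discount_mx_ge0.
Qed.

Lemma discount_mx_mono (x y : 'cV[R]_n) :
  (forall i, (discount_mx b Q *m y) i 0 <= (discount_mx b Q *m x) i 0) ->
  forall i, (discount_mx b Q *m x) i 0 - (discount_mx b Q *m y) i 0 <= x i 0 - y i 0.
Proof.
have subE i : (x - y) i 0 = x i 0 - y i 0 by rewrite !mxE.
have DsubE i : (discount_mx b Q *m (x - y)) i 0 =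
    (discount_mx b Q *m x) i 0 - (discount_mx b Q *m y) i 0.
  by rewrite mulmxBr !mxE.
move=> Dy_le i; rewrite -DsubE -subE; apply: discount_mx_le => j.
by rewrite DsubE subr_ge0.
Qed.

Lemma discount_mx_unit : discount_mx b Q \in unitmx.
Proof.
rewrite -unitmx_tr unitmxE unitfE; apply/negP => /det0P [v v_neq0 v_ker].
have Dv0 : discount_mx b Q *m v^T = 0.
  by rewrite -[_ *m _]trmxK trmx_mul trmxK v_ker trmx0.
have v_ge0 i : 0 <= v^T i 0 by apply: discount_mx_ge0 => j; rewrite Dv0 mxE.
have vN_ge0 i : 0 <= (- v^T) i 0.
  by apply: discount_mx_ge0 => j; rewrite mulmxN Dv0 oppr0 mxE.
move/negP: v_neq0; apply; apply/eqP/matrixP => i j.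
have := v_ge0 j; have := vN_ge0 j; rewrite !mxE oppr_ge0 => v_le v_ge.
by rewrite (ord1 i); apply/eqP; rewrite eq_le v_le v_ge.
Qed.

End DiscountMatrix.

Lemma sum_point_mass (R : realFieldType) (B : finType) (h : B -> R) (c : B) (F : B -> R) :
  (forall a, 0 <= h a) -> \sum_a h a = 1 -> h c = 1 -> \sum_a h a * F a = F c.
Proof.
move=> h_ge0 h_sum1 hc1.
have h_out0 : \sum_(a | a != c) h a = 0 by move: h_sum1; rewrite (bigD1 c) //= hc1; lra.
rewrite (bigD1 c) //= hc1 mul1r big1 ?addr0 // => a a_neq_c.
by rewrite (psumr_eq0P (fun a _ => h_ge0 a) h_out0) ?mul0r.
Qed.

Section PurePolicyMDP.
Variables (R : realFieldType) (n : nat) (B : 'I_n -> finType).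
Variables (r : forall s, B s -> R) (q : forall s, B s -> 'I_n -> R).
Arguments r : clear implicits.
Arguments q : clear implicits.
Hypotheses (q_ge0 : forall s a t, 0 <= q s a t)
           (q_sum1 : forall s a, \sum_t q s a t = 1).

Definition is_policy (h : forall s, B s -> R) : Prop :=
  (forall s a, 0 <= h s a) /\ (forall s, \sum_a h s a = 1).

Definition policy_rew (h : forall s, B s -> R) : 'cV[R]_n :=
  \col_s \sum_a h s a * r s a.

Definition policy_trans (h : forall s, B s -> R) : 'M[R]_n :=
  \matrix_(s, t) \sum_a h s a * q s a t.

Definition value (b : R) (h : forall s, B s -> R) : 'cV[R]_n :=
  invmx (discount_mx b (policy_trans h)) *m policy_rew h.

Definition advantage (b : R) (v : 'cV[R]_n) s (a : B s) : R :=
  r s a + b * \sum_t q s a t * v t 0 - v s 0.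
Arguments advantage b v s a : clear implicits.

Definition pure_policy (c : forall s, B s) : forall s, B s -> R :=
  fun s a => (a == c s)%:R.
Arguments pure_policy c s a : clear implicits.

Lemma pure_policyP (c : forall s, B s) :
  is_policy (pure_policy c) /\ forall s, pure_policy c s (c s) = 1.
Proof.
rewrite /pure_policy; split; last by move=> s; rewrite eqxx.
split=> [s a | s]; first exact: ler0n.
by rewrite (bigD1 (c s)) //= eqxx big1 ?addr0 // => a /negbTE ->.
Qed.

Lemma policy_trans_stochastic h : is_policy h -> row_stochastic (policy_trans h).
Proof.
move=> [h_ge0 h_sum1]; split=> [i j | i].
  by rewrite mxE; apply: sumr_ge0 => a _; apply: mulr_ge0.
under eq_bigr do rewrite mxE.
rewrite exchange_big /= -[RHS](h_sum1 i); apply: eq_bigr => a _.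
by rewrite -mulr_sumr q_sum1 mulr1.
Qed.

Lemma discount_value b h : is_policy h -> 0 <= b < 1 ->
  discount_mx b (policy_trans h) *m value b h = policy_rew h.
Proof.
move=> Hh Hb; rewrite mulKVmx //.
exact/discount_mx_unit/Hb/policy_trans_stochastic.
Qed.

Lemma discount_policy_advantage b h (v : 'cV[R]_n) i : is_policy h ->
  (discount_mx b (policy_trans h) *m v) i 0 =
    policy_rew h i 0 - \sum_a h i a * advantage b v i a.
Proof.
move=> [_ h_sum1]; rewrite discount_mxE mxE.
have -> : \sum_j policy_trans h i j * v j 0 = \sum_a h i a * \sum_t q i a t * v t 0.
  under eq_bigr do rewrite mxE mulr_suml.
  rewrite exchange_big /=; apply: eq_bigr => a _; rewrite mulr_sumr.
  by apply: eq_bigr => t _; rewrite mulrA.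
rewrite -{1}[v i 0]mul1r -(h_sum1 i) mulr_suml mulr_sumr -!sumrB.
by apply: eq_bigr => a _; rewrite /advantage; ring.
Qed.

Section PurePolicy.
Variables (h : forall s, B s -> R) (c : forall s, B s).
Arguments h : clear implicits.
Hypotheses (Hh : is_policy h) (h_pure : forall s, h s (c s) = 1).

Lemma pure_policy_rew s : policy_rew h s 0 = r s (c s).
Proof. by rewrite mxE; apply: sum_point_mass => //; [exact: Hh.1 | exact: Hh.2]. Qed.

Lemma discount_pure_advantage b (v : 'cV[R]_n) i :
  (discount_mx b (policy_trans h) *m v) i 0 = r i (c i) - advantage b v i (c i).
Proof.
rewrite discount_policy_advantage // pure_policy_rew.
by rewrite (sum_point_mass _ (Hh.1 i) (Hh.2 i) (h_pure i)).
Qed.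

Lemma pure_value_advantage b i : 0 <= b < 1 -> advantage b (value b h) i (c i) = 0.
Proof.
move=> Hb; have := discount_pure_advantage b (value b h) i.
by rewrite discount_value // pure_policy_rew; lra.
Qed.

End PurePolicy.

Lemma value_le_of_advantage_le0 b h0 : is_policy h0 -> 0 <= b < 1 ->
  (forall s a, advantage b (value b h0) s a <= 0) ->
  forall h, is_policy h -> forall s, value b h s 0 <= value b h0 s 0.
Proof.
move=> Hh0 Hb adv_le0 h Hh s.
have HQ := policy_trans_stochastic Hh.
have Dle i : (discount_mx b (policy_trans h) *m value b h) i 0 <=
             (discount_mx b (policy_trans h) *m value b h0) i 0.
  rewrite discount_value // discount_policy_advantage // lerBrDr gerDl.
  by apply: sumr_le0 => a _; apply: mulr_ge0_le0; [exact: Hh.1 | exact: adv_le0].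
rewrite -subr_ge0; apply: le_trans (discount_mx_mono HQ Hb Dle s).
by rewrite subr_ge0.
Qed.

(* Deviating to a at s only gives a pure policy that is strictly better at s. *)
Lemma advantage_le0_of_optimal b h0 c : is_policy h0 -> (forall s, h0 s (c s) = 1) ->
  0 <= b < 1 ->
  (forall h, is_policy h -> forall s, value b h s 0 <= value b h0 s 0) ->
  forall s a, advantage b (value b h0) s a <= 0.
Proof.
move=> Hh0 h0_pure Hb h0_opt s a; rewrite leNgt; apply/negP => adv_gt0.
set v := value b h0 in adv_gt0.
set c' := dfwith c a.
have [Hh' h'_pure] := pure_policyP c'.
set h' := pure_policy c' in Hh' h'_pure.
have adv_c' i : advantage b v i (c' i) = if i == s then advantage b v s a else 0.
  have [-> | i_neq_s] := eqVneq i s; first by rewrite /c' dfwith_in.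
  by rewrite /c' dfwith_out 1?eq_sym // (pure_value_advantage Hh0 h0_pure).
have Dle i : (discount_mx b (policy_trans h') *m v) i 0 <=
             (discount_mx b (policy_trans h') *m value b h') i 0.
  rewrite discount_value // (pure_policy_rew Hh' h'_pure).
  rewrite (discount_pure_advantage Hh' h'_pure) gerBl adv_c'.
  by case: eqP => _; [exact: ltW |].
have := discount_mx_mono (policy_trans_stochastic Hh') Hb Dle s.
rewrite discount_value // (pure_policy_rew Hh' h'_pure).
rewrite (discount_pure_advantage Hh' h'_pure) adv_c' eqxx.
by have := h0_opt h' Hh' s; lra.
Qed.

Section ConstantRows.
Variables (bb : forall s, B s) (p : 'I_n -> R).
Hypotheses (bb_row : forall s t, q s (bb s) t = p t) (p_sum1 : \sum_t p t = 1).

Let rho : R := \sum_u p u * r u (bb u).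

(* v - r(., bb) is the constant  b * sum_u p u * v u. *)
Lemma advantage_constant_rows b (v : 'cV[R]_n) :
  (forall i, advantage b v i (bb i) = 0) ->
  forall s a, advantage b v s a =
    (r s a - r s (bb s)) - b * (rho - \sum_t q s a t * r t (bb t)).
Proof.
move=> adv_bb0 s a.
set K := b * \sum_u p u * v u 0.
have vE t : v t 0 = r t (bb t) + K.
  by have := adv_bb0 t; rewrite /advantage /K; under eq_bigr do rewrite bb_row; lra.
have K_fix : K = b * rho + b * K.
  by rewrite {1}/K; under eq_bigr do rewrite vE mulrDr;
     rewrite big_split /= -mulr_suml p_sum1 mul1r mulrDr.
rewrite /advantage vE; under eq_bigr do rewrite vE mulrDr.
by rewrite big_split /= -mulr_suml q_sum1 mul1r; lra.
Qed.

Variables (hs : forall s, B s -> R) (hb : R).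
Arguments hs : clear implicits.
Hypotheses (Hhs : is_policy hs) (hs_pure : forall s, hs s (bb s) = 1)
  (C3 : forall s (a : B s), \sum_t q s a t * r t (bb t) <= rho)
  (Hhb : 0 <= hb < 1)
  (hs_opt : forall h, is_policy h -> forall s, value hb h s 0 <= value hb hs s 0).

Theorem blackwell_pure_policy b : hb <= b < 1 ->
  forall h, is_policy h -> forall s, value b h s 0 <= value b hs s 0.
Proof.
move=> /andP[hb_le_b b_lt1].
have Hb : 0 <= b < 1 by rewrite b_lt1 andbT (le_trans _ hb_le_b) //; case/andP: Hhb.
apply: value_le_of_advantage_le0 => // s a.
have := advantage_le0_of_optimal Hhs hs_pure Hhb hs_opt a.
rewrite !advantage_constant_rows => [|i|i]; try exact: pure_value_advantage.
have := C3 a; rewrite -subr_ge0 => /ler_wpM2r => /(_ _ _ hb_le_b); lra.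
Qed.

End ConstantRows.

End PurePolicyMDP.

Section FixedPureOpponent.
Variables (R : realFieldType) (B1 B2 : finType) (f : B1 -> R) (g : B2 -> R)
  (F : B1 -> B2 -> R).

Lemma sum_pure_second (c : B2) :
  (forall a, 0 <= g a) -> \sum_a g a = 1 -> g c = 1 ->
  \sum_a1 \sum_a2 f a1 * g a2 * F a1 a2 = \sum_a1 f a1 * F a1 c.
Proof.
move=> g_ge0 g_sum1 gc1; apply: eq_bigr => a1 _.
transitivity (\sum_a2 g a2 * (f a1 * F a1 a2)); first by apply: eq_bigr => a2 _; ring.
exact: sum_point_mass.
Qed.

Lemma sum_pure_first (c : B1) :
  (forall a, 0 <= f a) -> \sum_a f a = 1 -> f c = 1 ->
  \sum_a1 \sum_a2 f a1 * g a2 * F a1 a2 = \sum_a2 g a2 * F c a2.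
Proof.
move=> f_ge0 f_sum1 fc1.
transitivity (\sum_a1 f a1 * \sum_a2 g a2 * F a1 a2); last exact: sum_point_mass.
by apply: eq_bigr => a1 _; rewrite mulr_sumr; apply: eq_bigr => a2 _; ring.
Qed.

End FixedPureOpponent.

Lemma v1E (R : realFieldType) (n : nat) (G : game R n) (gs : strat2 G)
    (a2 : forall s, A2 G s) b (f : strat1 G) :
  is_strat2 gs -> (forall s, gs s (a2 s) = 1) ->
  v1 b f gs = value (fun s a => rew1 G s a (a2 s)) (fun s a => trans G s a (a2 s)) b f.
Proof.
move=> [gs_ge0 gs_sum1] gs_pure.
rewrite /v1 /value /discount_mx; congr (invmx (_ - _ *: _) *m _);
  apply/matrixP => i j; rewrite !mxE;
  by rewrite (sum_pure_second _ _ (gs_ge0 i) (gs_sum1 i) (gs_pure i)).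
Qed.

Lemma v2E (R : realFieldType) (n : nat) (G : game R n) (fs : strat1 G)
    (a1 : forall s, A1 G s) b (g : strat2 G) :
  is_strat1 fs -> (forall s, fs s (a1 s) = 1) ->
  v2 b fs g = value (fun s a => rew2 G s (a1 s) a) (fun s a => trans G s (a1 s) a) b g.
Proof.
move=> [fs_ge0 fs_sum1] fs_pure.
rewrite /v2 /value /discount_mx; congr (invmx (_ - _ *: _) *m _);
  apply/matrixP => i j; rewrite !mxE;
  by rewrite (sum_pure_first _ _ (fs_ge0 i) (fs_sum1 i) (fs_pure i)).
Qed.

Theorem theorem2 (R : realFieldType) (n : nat) (G : game R n)
  (HG : game_wf G) (fs : strat1 G) (gs : strat2 G)
  (Hf : is_strat1 fs) (Hg : is_strat2 gs) (hb : R) (Hhb : 0 <= hb < 1)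
  (HNE : disc_NE hb fs gs)
  (* (C1) purity *)
  (a1 : forall s : 'I_n, A1 G s) (a2 : forall s : 'I_n, A2 G s)
  (Hpf : forall s, fs s (a1 s) = 1) (Hpg : forall s, gs s (a2 s) = 1)
  (* (C2) all rows of P(fs,gs) equal p *)
  (p : 'I_n -> R) (Hp0 : forall s, 0 <= p s) (Hp1 : \sum_(s < n) p s = 1)
  (HP : forall s s', P_fg fs gs s s' = p s')
  (* (C3) *)
  (HC31 : forall (s : 'I_n) (b1 : A1 G s),
     \sum_(s' < n) trans G s b1 (a2 s) s' * rew1 G s' (a1 s') (a2 s')
       <= \sum_(s' < n) p s' * rew1 G s' (a1 s') (a2 s'))
  (HC32 : forall (s : 'I_n) (b2 : A2 G s),
     \sum_(s' < n) trans G s (a1 s) b2 s' * rew2 G s' (a1 s') (a2 s')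
       <= \sum_(s' < n) p s' * rew2 G s' (a1 s') (a2 s')) :
  BNE fs gs.
Proof.
have [_ [_ [trans_ge0 trans_sum1]]] := HG.
have [[fs_ge0 fs_sum1] [gs_ge0 gs_sum1]] := (Hf, Hg).
have row_eq s t : trans G s (a1 s) (a2 s) t = p t.
  rewrite -(HP s) mxE (sum_pure_second _ _ (gs_ge0 s) (gs_sum1 s) (Hpg s)).
  by rewrite (sum_point_mass _ (fs_ge0 s) (fs_sum1 s) (Hpf s)).
exists hb; split => // b Hb s; split.
- move=> f Hf'; rewrite !(v1E _ _ Hg Hpg).
  apply: (blackwell_pure_policy (fun s a => trans_ge0 s a (a2 s))
    (fun s a => trans_sum1 s a (a2 s)) row_eq Hp1 Hf Hpf HC31 Hhb) => // h Hh s'.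
  by rewrite -!(v1E _ _ Hg Hpg); apply: (HNE s').1.
- move=> g Hg'; rewrite !(v2E _ _ Hf Hpf).
  apply: (blackwell_pure_policy (fun s => trans_ge0 s (a1 s))
    (fun s => trans_sum1 s (a1 s)) row_eq Hp1 Hg Hpg HC32 Hhb) => // h Hh s'.
  by rewrite -!(v2E _ _ Hf Hpf); apply: (HNE s').2.
Qed.
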